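(* Let $G$ be an $a\times a$ pseudogrid with $a\ge 5$ (with grid-partition $\mathcal{P}$), and let $s,v,w,t$ be vertices of $G$ with $s$ in column $1$ of $G$, $v,w\in\mathrm{int}_1(G)$, and $t$ in column $a$ of $G$. Then $G$ contains a path $P$ with endpoints $s$ and $t$ that contains $v$ and $w$.
   Context: For a positive integer $a$, the grid $G_{a\times a}$ has vertex set $\{1,\dots,a\}^2$, with $(i_1,j_1)$ and $(i_2,j_2)$ adjacent iff $|i_1-i_2|+|j_1-j_2|=1$. For a graph $H$, $\mathrm{VE}(H):=V(H)\cup E(H)$. An $a\times a$ pseudogrid is any graph obtained from $G_{a\times a}$ as follows: each edge $vw$ is replaced by a path $\overline{P}_{vw}$ with endpoints $v,w$ (subdividing $vw$ zero or more times); each vertex $v=(i,j)$ of degree $4$ is replaced by a nonempty path $P_v$: if $P_v$ has one vertex it plays the role of $v$; otherwise its endpoints $p,q$ are attached, $p$ to the paths $\overline{P}_{vw}$ towards two of the grid neighbours of $v$ and $q$ to the other two, in one of the patterns (Q1) $p$: $(i-1,j),(i,j-1)$, $q$: $(i+1,j),(i,j+1)$; (Q2) $p$: $(i,j+1),(i-1,j)$, $q$: $(i,j-1),(i+1,j)$; (Q3) $p$: $(i-1,j),(i+1,j)$, $q$: $(i,j-1),(i,j+1)$. For each grid edge $vw$, $P_{vw}$ is the (possibly empty) path of internal vertices of $\overline{P}_{vw}$; for each grid vertex $v$ of degree less than $4$, $P_v$ is the one-vertex path on $v$; $\mathcal{P}=\{V(P_\mu):\mu\in\mathrm{VE}(G_{a\times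 a})\}$ is the grid-partition. Column $1$ of $G$ is the path $\bigcup_{j=1}^{a-1}\overline{P}_{(1,j)(1,j+1)}$, and column $a$ of $G$ is the path $\bigcup_{j=1}^{a-1}\overline{P}_{(a,j)(a,j+1)}$. $\mathrm{int}_r(G_{a\times a})$ is the subgraph of $G_{a\times a}$ induced on $\{1+r,\dots,a-r\}^2$, and $\mathrm{int}_r(G):=\bigcup_{\mu\in\mathrm{VE}(\mathrm{int}_r(G_{a\times a}))}V(P_\mu)$. *)

From mathcomp Require Import all_boot.
Set Implicit Arguments. Unset Strict Implicit. Unset Printing Implicit Defensive.

(* Grid coordinates are 1-indexed: grid vertex (i,j), 1 <= i,j <= a;
   column c of G_{a x a} is {(c,j) : 1 <= j <= a}.
   Directions of the grid neighbours of (i,j):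
   dW = (i-1,j), dE = (i+1,j), dS = (i,j-1), dN = (i,j+1). *)
Inductive dir := dW | dE | dS | dN.

(* The three attachment patterns for the path P_v replacing a degree-4 vertex. *)
Inductive pattern := Q1 | Q2 | Q3.

(* Nodes of the pseudogrid, encoded as (tag, i, j, k):
   tag 0 : k-th vertex (k = 0 is the endpoint p, the last one is q) of P_(i,j)
   tag 1 : k-th internal vertex (from (i,j) towards (i+1,j)) of the path
           replacing the grid edge (i,j)(i+1,j)
   tag 2 : k-th internal vertex (from (i,j) towards (i,j+1)) of the path
           replacing the grid edge (i,j)(i,j+1). *)
Definition node := (nat * nat * nat * nat)%type.

(* Parameters of the construction:
   plen i j  : P_(i,j) has (plen i j).+1 vertices when (i,j) has degree 4
               (any nonempty path), and 1 vertex otherwise;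
   hsub i j  : number of subdivision vertices on edge (i,j)(i+1,j);
   vsub i j  : number of subdivision vertices on edge (i,j)(i,j+1);
   pat i j   : attachment pattern used at (i,j) (relevant when P_(i,j) has
               at least 2 vertices). *)
Record pgparams := PGParams {
  plen : nat -> nat -> nat;
  hsub : nat -> nat -> nat;
  vsub : nat -> nat -> nat;
  pat  : nat -> nat -> pattern }.

Section Pseudogrid.
Variables (a : nat) (P : pgparams).

Definition deg4 (i j : nat) : bool := (2 <= i <= a - 1) && (2 <= j <= a - 1).

Definition vlen (i j : nat) : nat := if deg4 i j then (plen P i j).+1 else 1.

(* whether the neighbour in direction d is attached to the endpoint p *)
Definition onp (q : pattern) (d : dir) : bool :=
  match q, d with
  | Q1, dW | Q1, dS => true
  | Q2, dN | Q2, dW => true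
  | Q3, dW | Q3, dE => true
  | _, _ => false
  end.

Definition attach (i j : nat) (d : dir) : node :=
  (0, i, j, if onp (pat P i j) d then 0 else (vlen i j).-1).

Definition is_vertex (x : node) : Prop :=
  match x with
  | (0, i, j, k) => [/\ 1 <= i <= a, 1 <= j <= a & k < vlen i j]
  | (1, i, j, k) => [/\ 1 <= i < a, 1 <= j <= a & k < hsub P i j]
  | (2, i, j, k) => [/\ 1 <= i <= a, 1 <= j < a & k < vsub P i j]
  | _ => False
  end.

Definition vseq (i j : nat) : seq node := [seq (0, i, j, k) | k <- iota 0 (vlen i j)].
Definition hseq (i j : nat) : seq node :=
  attach i j dE :: [seq (1, i, j, k) | k <- iota 0 (hsub P i j)] ++ [:: attach i.+1 j dW].
Definition vertseq (i j : nat) : seq node :=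
  attach i j dN :: [seq (2, i, j, k) | k <- iota 0 (vsub P i j)] ++ [:: attach i j.+1 dS].

Definition piece (s : seq node) : Prop :=
  exists i j,
    [/\ 1 <= i <= a, 1 <= j <= a & s = vseq i j] \/
    [/\ 1 <= i < a, 1 <= j <= a & s = hseq i j] \/
    [/\ 1 <= i <= a, 1 <= j < a & s = vertseq i j].

Definition consecutive (x y : node) (s : seq node) : Prop :=
  exists s1 s2, s = s1 ++ [:: x, y & s2].

Definition adj (x y : node) : Prop :=
  exists s, piece s /\ (consecutive x y s \/ consecutive y x s).

Definition gpath_between (p : seq node) (x y : node) : Prop :=
  [/\ uniq p,
      (forall z, z \in p -> is_vertex z),
      (forall k, k.+1 < size p -> adj (nth x p k) (nth x p k.+1)),
      head y p = x & last x p = y] /\ p <> [::].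

(* x lies in column c of G, i.e. on the union of the paths
   \bar P_{(c,j)(c,j+1)}, 1 <= j < a *)
Definition in_column (c : nat) (x : node) : Prop :=
  is_vertex x /\
  match x with
  | (0, i, _, _) | (2, i, _, _) => i = c
  | _ => False
  end.

Definition in_int (r : nat) (x : node) : Prop :=
  is_vertex x /\
  match x with
  | (0, i, j, _) => 1 + r <= i <= a - r /\ 1 + r <= j <= a - r
  | (1, i, j, _) => 1 + r <= i /\ i.+1 <= a - r /\ 1 + r <= j <= a - r
  | (2, i, j, _) => 1 + r <= i <= a - r /\ 1 + r <= j /\ j.+1 <= a - r
  | _ => False
  end.

End Pseudogrid.

From mathcomp Require Import all_boot zify.
Set Implicit Arguments. Unset Strict Implicit. Unset Printing Implicit Defensive.

(* Walks in the grid G_{a x a} lift to walks in the pseudogrid: passing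
   through a grid vertex x from direction d1 to direction d2 uses only the
   attachment vertex of P_x if d1 and d2 are attached to the same end of P_x,
   and all of P_x otherwise, while a grid edge becomes its subdivided path;
   lifts of grid paths are paths.  We lift "snakes", which sweep the columns
   from left to right, running in column i from row R (i-1) to row R i and
   then stepping right.  A snake visits an inner vertex of a horizontal edge
   in row j iff R i = j, one of a vertical edge iff the edge lies between rows
   R (i-1) and R i, and a vertex of P_(i,j) depending on the attachment
   pattern at (i,j).  As a >= 5 and v, w lie in int_1(G), the rows can be
   chosen so that the snake visits both, except when v and w lie on two
   horizontal edges between the same columns; there a walk crossing these
   columns three times is used instead.  Finally s and t are connected to the
   lift along columns 1 and a, the end rows R 0 and R a being chosen so that
   these connections avoid the lift. *)

Lemma iota_rcons m n : iota m n.+1 = rcons (iota m n) (m + n).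
Proof. by rewrite -cats1 -addn1 iotaD. Qed.

Lemma iota_split m n j : m <= j <= m + n ->
  iota m n = iota m (j - m) ++ iota j (m + n - j).
Proof.
move=> h; rewrite {1}(_ : n = (j - m) + (m + n - j)); last by lia.
by rewrite iotaD (_ : m + (j - m) = j) //; lia.
Qed.

Lemma infix_last_head (T : eqType) (p q x : T) s1 s2 :
  infix [:: last p s1; x; head q s2] (p :: s1 ++ x :: s2 ++ [:: q]).
Proof.
apply/infixP; exists (belast p s1), (behead (rcons s2 q)).
rewrite -cat_cons (lastI p s1) cat_rcons /= cats1.
by congr (_ ++ _ :: _ :: _); apply: headI.
Qed.

Lemma last_rev_head (T : Type) (x : T) s : last x (rev s) = head x s.
Proof. by case: s => //= y s; rewrite rev_cons last_rcons. Qed.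

Section Chain.
Variables (T : Type) (e : T -> T -> Prop).

Fixpoint chain (s : seq T) : Prop :=
  match s with
  | x :: ((y :: _) as s') => e x y /\ chain s'
  | _ => True
  end.

Lemma chain_cat_shared s1 x s2 :
  chain (rcons s1 x) -> chain (x :: s2) -> chain (s1 ++ x :: s2).
Proof.
elim: s1 => [|y s1 IH] //=.
case: s1 IH => [|z s1] IH /=; first by case=> h _ c; split.
by case=> h c1 c2; split=> //; apply: IH.
Qed.

Lemma chain_catl s1 s2 : chain (s1 ++ s2) -> chain s1.
Proof.
elim: s1 => [|y s1 IH] //=.
by case: s1 IH => [|z s1] IH //= [h c]; split=> //; apply: IH.
Qed.

Lemma chain_catr s1 s2 : chain (s1 ++ s2) -> chain s2.
Proof.
elim: s1 => [|y s1 IH] //= c; apply: IH.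
by move: c; case: (s1 ++ s2) => // z s [].
Qed.

Lemma chain_of_consecutive s :
  (forall s1 s2 x y, s = s1 ++ [:: x, y & s2] -> e x y) -> chain s.
Proof.
elim: s => [|x s IH] //=.
case: s IH => [|y s] IH // H; split; first exact: (H [::] s).
by apply: IH => s1 s2 u w E; apply: (H (x :: s1) s2); rewrite E.
Qed.

Lemma chain_nth x0 s : chain s ->
  forall k, k.+1 < size s -> e (nth x0 s k) (nth x0 s k.+1).
Proof.
elim: s => [|x s IH] //=.
by case: s IH => [|y s] IH //= [h c] [|k] //= lt; apply: IH.
Qed.

Hypothesis e_sym : forall x y, e x y -> e y x.

Lemma chain_rev s : chain s -> chain (rev s).
Proof.
elim: s => [|x s IH] //=; case: s IH => [|y s] IH // [exy c].
rewrite rev_cons -cats1 rev_cons cat_rcons.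
apply: chain_cat_shared; last by split=> //; apply: e_sym.
by rewrite -rev_cons; apply: IH.
Qed.

End Chain.

(** * Walks in the grid *)

Notation gvertex := (nat * nat)%type.

Definition gadj (x y : gvertex) : bool :=
  [|| y == (x.1.+1, x.2), x == (y.1.+1, y.2), y == (x.1, x.2.+1) | x == (y.1, y.2.+1)].

Lemma gadjP x y : gadj x y ->
  [\/ y = (x.1.+1, x.2), x = (y.1.+1, y.2), y = (x.1, x.2.+1) | x = (y.1, y.2.+1)].
Proof. by case/or4P => /eqP E; [apply: Or41 | apply: Or42 | apply: Or43 | apply: Or44]. Qed.

Lemma gadj_sym : symmetric gadj.
Proof.
by move=> x y; rewrite /gadj; case: (y == _) (x == _) (y == (_, _)) (x == (_, _)) => [] [] [] [].
Qed.

Definition rows (x y : nat) : seq nat :=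
  if x <= y then iota x (y - x).+1 else rev (iota y (x - y).+1).

Definition colseg (i x y : nat) : seq gvertex := [seq (i, r) | r <- rows x y].

Lemma mem_rows x y r : (r \in rows x y) = (minn x y <= r <= maxn x y).
Proof. by rewrite /rows; case: leqP => h; rewrite ?mem_rev mem_iota; apply/idP/idP; lia. Qed.

Lemma colseg_head i x y : exists l, colseg i x y = (i, x) :: l.
Proof.
rewrite /colseg /rows; case: leqP => h; first by eexists.
rewrite iota_rcons rev_rcons /= (_ : y + (x - y) = x); [by eexists | lia].
Qed.

Lemma colseg_last i x y : exists l, colseg i x y = rcons l (i, y).
Proof.
rewrite /colseg /rows; case: leqP => h; last by rewrite /= rev_cons map_rcons; eexists.
rewrite iota_rcons map_rcons (_ : x + (y - x) = y); [by eexists | lia].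
Qed.

Lemma mem_colseg i x y z :
  (z \in colseg i x y) = (z.1 == i) && (minn x y <= z.2 <= maxn x y).
Proof.
case: z => i' r /=; apply/mapP/idP.
  by case=> r' h [-> ->]; rewrite eqxx -mem_rows h.
by case/andP => /eqP -> h; exists r => //; rewrite mem_rows.
Qed.

Lemma colseg_uniq i x y : uniq (colseg i x y).
Proof.
rewrite map_inj_uniq => [|r1 r2 [] //].
by rewrite /rows; case: ifP; rewrite ?rev_uniq iota_uniq.
Qed.

Lemma sorted_column_iota i r n : sorted gadj [seq (i, k) | k <- iota r n].
Proof.
elim: n r => [|n IH] r //; case: n IH => [|n] IH // /=.
by rewrite /gadj /= eqxx !orbT; apply: IH.
Qed.

Lemma sorted_colseg i x y : sorted gadj (colseg i x y).
Proof.
rewrite /colseg /rows; case: ifP => _; first exact: sorted_column_iota.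
rewrite map_rev rev_sorted (eq_sorted (e' := gadj)) ?sorted_column_iota //.
by move=> ? ?; rewrite gadj_sym.
Qed.

Lemma last_colseg p i x y : last p (colseg i x y) = (i, y).
Proof. by have [l ->] := colseg_last i x y; rewrite last_rcons. Qed.

Lemma path_colseg p i x y : gadj p (i, x) -> path gadj p (colseg i x y).
Proof.
move=> g; have := sorted_colseg i x y; have [l E] := colseg_head i x y.
by rewrite E /= g.
Qed.

Definition snake (m n : nat) (R : nat -> nat) : seq gvertex :=
  flatten [seq colseg i (R i.-1) (R i) | i <- iota m n].

Lemma snake0 m R : snake m 0 R = [::].
Proof. by []. Qed.

Lemma snake_cons m n R : snake m n.+1 R = colseg m (R m.-1) (R m) ++ snake m.+1 n R.
Proof. by []. Qed.

Lemma snake_cat m n1 n2 R : snake m (n1 + n2) R = snake m n1 R ++ snake (m + n1) n2 R.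
Proof. by rewrite /snake iotaD map_cat flatten_cat. Qed.

Lemma mem_snake m n R z : (z \in snake m n R) =
  (m <= z.1 < m + n) && (minn (R z.1.-1) (R z.1) <= z.2 <= maxn (R z.1.-1) (R z.1)).
Proof.
case: z => zi zj /=.
elim: n m => [|n IH] m; first by apply/esym/negbTE; lia.
rewrite snake_cons mem_cat IH mem_colseg /=.
case: (eqVneq zi m) => [->|ne] /=.
  by rewrite leqnn; apply/idP/idP; [case/orP; lia | move=> h; apply/orP; left; lia].
apply/idP/idP => [/andP[h1 h2]|/andP[h1 h2]]; apply/andP; split=> //; lia.
Qed.

Lemma snake_uniq m n R : uniq (snake m n R).
Proof.
elim: n m => [|n IH] m //; rewrite snake_cons cat_uniq colseg_uniq IH andbT /=.
apply/hasPn => z; rewrite mem_snake mem_colseg => /andP[h _].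
by apply/negP => /andP[/eqP e _]; lia.
Qed.

Lemma path_snake m n R : 0 < m -> path gadj (m.-1, R m.-1) (snake m n R).
Proof.
elim: n m => [|n IH] m m0 //.
rewrite snake_cons cat_path last_colseg -[(m, R m)]/(m.+1.-1, R m.+1.-1) IH // andbT.
by apply: path_colseg; rewrite /gadj /= prednK ?eqxx.
Qed.

Lemma last_snake m n R : 0 < m ->
  last (m.-1, R m.-1) (snake m n R) = ((m + n).-1, R (m + n).-1).
Proof.
elim: n m => [|n IH] m m0; first by rewrite addn0.
by rewrite snake_cons last_cat last_colseg -[(m, R m)]/(m.+1.-1, R m.+1.-1) IH // addSnnS.
Qed.

Lemma eq_snake m n R R' : {in [pred i | m.-1 <= i < m + n], R =1 R'} ->
  snake m n R = snake m n R'.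
Proof.
move=> E; rewrite /snake; congr flatten; apply/eq_in_map => i; rewrite mem_iota => h.
by rewrite !E // inE; lia.
Qed.

Definition snake_prev (i u j : nat) : gvertex :=
  if j == u then (i.-1, u) else (i, if u < j then j.-1 else j.+1).

Definition snake_next (i j y : nat) : gvertex :=
  if j == y then (i.+1, y) else (i, if j < y then j.+1 else j.-1).

Lemma infix_colseg_triple (p q : gvertex) i u y j : minn u y <= j <= maxn u y ->
  infix [:: if j == u then p else (i, if u < j then j.-1 else j.+1); (i, j);
            if j == y then q else (i, if j < y then j.+1 else j.-1)]
        (p :: colseg i u y ++ [:: q]).
Proof.
rewrite /colseg /rows; case: (leqP u y) => uy hj.
  rewrite (@iota_split u _ j); last by lia.
  rewrite (_ : u + (y - u).+1 - j = (y - j).+1) /=; last by lia.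
  rewrite map_cat -catA /=.
  set s1 := map _ (iota u _); set s2 := map _ (iota j.+1 _).
  have -> : (if j == u then p else (i, if u < j then j.-1 else j.+1)) = last p s1.
    rewrite /s1; case: eqP => [->|ne]; first by rewrite subnn.
    rewrite (_ : j - u = (j - u).-1.+1) ?iota_rcons ?map_rcons ?last_rcons; last by lia.
    by rewrite ifT; [congr pair; lia | lia].
  have -> : (if j == y then q else (i, if j < y then j.+1 else j.-1)) = head q s2.
    rewrite /s2; case: eqP => [->|ne]; first by rewrite subnn.
    by rewrite (_ : y - j = (y - j).-1.+1) /= ?ifT //; lia.
  exact: infix_last_head.
rewrite (@iota_split y _ j); last by lia.
rewrite (_ : y + (u - y).+1 - j = (u - j).+1) /=; last by lia.
rewrite rev_cat rev_cons cat_rcons map_cat -catA /=.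
set s1 := map _ (rev (iota j.+1 _)); set s2 := map _ (rev (iota y _)).
have -> : (if j == u then p else (i, if u < j then j.-1 else j.+1)) = last p s1.
  rewrite /s1; case: eqP => [->|ne]; first by rewrite subnn.
  rewrite (_ : u - j = (u - j).-1.+1) /= ?rev_cons ?map_rcons ?last_rcons; last by lia.
  by rewrite ifF //; lia.
have -> : (if j == y then q else (i, if j < y then j.+1 else j.-1)) = head q s2.
  rewrite /s2; case: eqP => [->|ne]; first by rewrite subnn.
  rewrite (_ : j - y = (j - y).-1.+1) ?iota_rcons ?rev_rcons /=; last by lia.
  by rewrite ifF; [congr pair; lia | lia].
exact: infix_last_head.
Qed.

Lemma infix_colseg_step i u y j : minn u y <= j < maxn u y ->
  infix [:: (i, j); (i, j.+1)] (colseg i u y) \/ infix [:: (i, j.+1); (i, j)] (colseg i u y).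
Proof.
rewrite /colseg /rows; case: (leqP u y) => uy hj; [left | right]; apply/infixP.
  rewrite (@iota_split u _ j); last by lia.
  rewrite (_ : u + (y - u).+1 - j = (y - j.+1).+2); last by lia.
  by rewrite map_cat; eexists; eexists.
rewrite (@iota_split y _ j); last by lia.
rewrite (_ : y + (u - y).+1 - j = (u - j.+1).+2); last by lia.
by rewrite rev_cat /= !rev_cons -!cats1 -!catA !map_cat /=; eexists; eexists.
Qed.

Lemma infix_colseg_join i x y i' y' :
  infix [:: (i, y); (i', y)] (colseg i x y ++ colseg i' y y').
Proof.
have [l E] := colseg_last i x y; have [l' E'] := colseg_head i' y y'.
by apply/infixP; exists l, l'; rewrite E E' -cats1 -catA.
Qed.

Lemma snake_split3 n i R : 2 <= i < n ->
  snake 1 n R = snake 1 (i - 2) R ++ colseg i.-1 (R i.-2) (R i.-1) ++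
    colseg i (R i.-1) (R i) ++ colseg i.+1 (R i) (R i.+1) ++ snake i.+2 (n - i.+1) R.
Proof.
move=> h; rewrite {1}(_ : n = (i - 2) + (3 + (n - i.+1))); last by lia.
rewrite snake_cat snake_cat (_ : 1 + (i - 2) = i.-1); last by lia.
rewrite (_ : i.-1 + 3 = i.+2); last by lia.
by rewrite !snake_cons (_ : i.-1.+1 = i) /= ?cats0 -?catA //; lia.
Qed.

Lemma infix_snake_triple n i j R : 2 <= i < n ->
  minn (R i.-1) (R i) <= j <= maxn (R i.-1) (R i) ->
  infix [:: snake_prev i (R i.-1) j; (i, j); snake_next i j (R i)] (snake 1 n R).
Proof.
move=> hi hj; rewrite (snake_split3 R hi).
have [l1 E1] := colseg_last i.-1 (R i.-2) (R i.-1).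
have [l3 E3] := colseg_head i.+1 (R i) (R i.+1).
set C := colseg i _ _; set B := snake i.+2 _ R.
have -> : colseg i.-1 (R i.-2) (R i.-1) ++ C ++ colseg i.+1 (R i) (R i.+1) ++ B =
    l1 ++ ((i.-1, R i.-1) :: C ++ [:: (i.+1, R i)]) ++ l3 ++ B.
  by rewrite E1 E3 -cats1 -!catA /= -?catA.
by apply/infix_catl/infix_catl/infix_catr; apply: infix_colseg_triple.
Qed.

Lemma infix_snake_right n i R : 1 <= i < n ->
  infix [:: (i, R i); (i.+1, R i)] (snake 1 n R).
Proof.
move=> hi; rewrite (_ : n = i.-1 + (2 + (n - i.+1))); last by lia.
rewrite snake_cat snake_cat (_ : 1 + i.-1 = i); last by lia.
have [l1 E1] := colseg_last i (R i.-1) (R i).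
have [l3 E3] := colseg_head i.+1 (R i) (R i.+1).
rewrite !snake_cons snake0 cats0 E1 E3 -cats1 -!catA.
by apply/infix_catl/infix_catl/infixP; exists [::], (l3 ++ snake (i + 2) (n - i.+1) R).
Qed.

Lemma infix_snake_step n i j R : 1 <= i <= n ->
  minn (R i.-1) (R i) <= j < maxn (R i.-1) (R i) ->
  infix [:: (i, j); (i, j.+1)] (snake 1 n R) \/ infix [:: (i, j.+1); (i, j)] (snake 1 n R).
Proof.
move=> hi hj; rewrite (_ : n = i.-1 + (1 + (n - i))); last by lia.
rewrite snake_cat snake_cat (_ : 1 + i.-1 = i); last by lia.
rewrite snake_cons snake0 cats0.
by case: (infix_colseg_step i hj) => h; [left | right]; apply/infix_catl/infix_catr.
Qed.

(** * Lifting grid walks to the pseudogrid *)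

Section Lifting.
Variables (a : nat) (P : pgparams).

Definition ntag (z : node) : nat := z.1.1.1.
Definition ni (z : node) : nat := z.1.1.2.
Definition nj (z : node) : nat := z.1.2.

Definition in_grid (x : gvertex) : bool := (1 <= x.1 <= a) && (1 <= x.2 <= a).

Definition dir_to (x y : gvertex) : dir :=
  if x.1 < y.1 then dE else if y.1 < x.1 then dW else if x.2 < y.2 then dN else dS.

Lemma dir_to_right i j : dir_to (i, j) (i.+1, j) = dE.
Proof. by rewrite /dir_to /= ltnSn. Qed.

Lemma dir_to_left i j : dir_to (i.+1, j) (i, j) = dW.
Proof. by rewrite /dir_to /= ltnNge leqnSn ltnSn. Qed.

Lemma dir_to_up i j : dir_to (i, j) (i, j.+1) = dN.
Proof. by rewrite /dir_to /= ltnn ltnSn. Qed.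

Lemma dir_to_down i j : dir_to (i, j.+1) (i, j) = dS.
Proof. by rewrite /dir_to /= ltnn ltnNge leqnSn. Qed.

Definition traverse (x : gvertex) (d1 d2 : dir) : seq node :=
  let q := pat P x.1 x.2 in
  if onp q d1 == onp q d2 then [:: attach a P x.1 x.2 d1]
  else if onp q d1 then vseq a P x.1 x.2 else rev (vseq a P x.1 x.2).

Definition hinner (i j : nat) : seq node := [seq (1, i, j, k) | k <- iota 0 (hsub P i j)].
Definition vinner (i j : nat) : seq node := [seq (2, i, j, k) | k <- iota 0 (vsub P i j)].

Definition edge_inner (x y : gvertex) : seq node :=
  if x.1 < y.1 then hinner x.1 x.2 else if y.1 < x.1 then rev (hinner y.1 y.2)
  else if x.2 < y.2 then vinner x.1 x.2 else rev (vinner y.1 y.2).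

Lemma edge_inner_right i j : edge_inner (i, j) (i.+1, j) = hinner i j.
Proof. by rewrite /edge_inner /= ltnSn. Qed.

Lemma edge_inner_left i j : edge_inner (i.+1, j) (i, j) = rev (hinner i j).
Proof. by rewrite /edge_inner /= ltnNge leqnSn ltnSn. Qed.

Lemma edge_inner_up i j : edge_inner (i, j) (i, j.+1) = vinner i j.
Proof. by rewrite /edge_inner /= ltnn ltnSn. Qed.

Lemma edge_inner_down i j : edge_inner (i, j.+1) (i, j) = rev (vinner i j).
Proof. by rewrite /edge_inner /= ltnn ltnNge leqnSn. Qed.

(* A walk is taken to enter its first vertex from the west and to leave its
   last one to the east; this is immaterial for the walks lifted below, which
   start in column 1 and end in column a. *)
Fixpoint lift_from (din : dir) (x : gvertex) (W : seq gvertex) : seq node :=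
  match W with
  | [::] => traverse x din dE
  | y :: W' => traverse x din (dir_to x y) ++ edge_inner x y ++ lift_from (dir_to y x) y W'
  end.

Definition lift_walk (W : seq gvertex) : seq node :=
  if W is x :: W' then lift_from dW x W' else [::].

Definition covered (W : seq gvertex) (z : node) : bool :=
  if ntag z == 0 then (ni z, nj z) \in W
  else if ntag z == 1 then ((ni z, nj z) \in W) && (((ni z).+1, nj z) \in W)
  else ((ni z, nj z) \in W) && ((ni z, (nj z).+1) \in W).

Lemma vlen_gt0 i j : 0 < vlen a P i j.
Proof. by rewrite /vlen; case: ifP. Qed.

Lemma vseq_uniq i j : uniq (vseq a P i j).
Proof. by rewrite /vseq map_inj_uniq ?iota_uniq // => k1 k2 [->]. Qed.

Lemma vseq_ends i j : exists r1 r2,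
  vseq a P i j = (0, i, j, 0) :: r1 /\ vseq a P i j = rcons r2 (0, i, j, (vlen a P i j).-1).
Proof.
rewrite /vseq; have := vlen_gt0 i j; case: (vlen a P i j) => // n _.
exists [seq (0, i, j, k) | k <- iota 1 n], [seq (0, i, j, k) | k <- iota 0 n].
by split=> //; rewrite iota_rcons map_rcons.
Qed.

Lemma traverse_ends x d1 d2 : exists r1 r2,
  traverse x d1 d2 = attach a P x.1 x.2 d1 :: r1 /\
  traverse x d1 d2 = rcons r2 (attach a P x.1 x.2 d2).
Proof.
rewrite /traverse /attach; have [r1 [r2 [E1 E2]]] := vseq_ends x.1 x.2.
case: (onp _ d1) (onp _ d2) => [] [] /=.
- by exists [::], [::].
- by exists r1, r2; rewrite -E1 -E2.
- by exists (rev r2), (rev r1); rewrite {1}E2 E1 rev_rcons rev_cons.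
- by exists [::], [::].
Qed.

Lemma mem_traverse x d1 d2 z : z \in traverse x d1 d2 ->
  exists2 k, z = (0, x.1, x.2, k) & k < vlen a P x.1 x.2.
Proof.
have Hv : z \in vseq a P x.1 x.2 -> exists2 k, z = (0, x.1, x.2, k) & k < vlen a P x.1 x.2.
  by case/mapP=> k; rewrite mem_iota add0n => /andP[_ lt] ->; exists k.
rewrite /traverse /attach; case: ifP => _; last by case: ifP => _; rewrite ?mem_rev.
rewrite inE => /eqP ->; eexists; first reflexivity.
by case: (onp _ _); rewrite ?ltn_predL vlen_gt0.
Qed.

Lemma traverse_uniq x d1 d2 : uniq (traverse x d1 d2).
Proof. by rewrite /traverse; case: ifP => _ //; case: ifP => _; rewrite ?rev_uniq vseq_uniq. Qed.

Lemma adj_sym x y : adj a P x y -> adj a P y x.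
Proof. by case=> s [ps [h|h]]; exists s; split=> //; [right | left]. Qed.

Lemma piece_chain s : piece a P s -> chain (adj a P) s.
Proof.
move=> ps; apply: chain_of_consecutive => s1 s2 x y E.
by exists s; split=> //; left; exists s1, s2.
Qed.

Lemma piece_rev_chain s : piece a P s -> chain (adj a P) (rev s).
Proof. by move/piece_chain; apply: chain_rev; apply: adj_sym. Qed.

Lemma traverse_chain x d1 d2 : in_grid x -> chain (adj a P) (traverse x d1 d2).
Proof.
case/andP=> hi hj; have ps : piece a P (vseq a P x.1 x.2) by exists x.1, x.2; left.
rewrite /traverse; case: ifP => _ //; case: ifP => _; last exact: piece_rev_chain.
exact: piece_chain.
Qed.

Lemma edge_lift_chain x y : gadj x y -> in_grid x -> in_grid y ->
  chain (adj a P)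
    (attach a P x.1 x.2 (dir_to x y) :: edge_inner x y ++ [:: attach a P y.1 y.2 (dir_to y x)]).
Proof.
case: x y => i j [i' j'].
case/gadjP => [[-> ->]|[-> ->]|[-> ->]|[-> ->]] /andP[/andP[h1 h2] /andP[h3 h4]]
  /andP[/andP[h5 h6] /andP[h7 h8]].
- rewrite dir_to_right dir_to_left edge_inner_right; apply: piece_chain.
  by exists i, j; right; left; split=> //; apply/andP.
- rewrite dir_to_right dir_to_left edge_inner_left.
  have -> : attach a P i'.+1 j' dW :: rev (hinner i' j') ++ [:: attach a P i' j' dE]
    = rev (hseq a P i' j') by rewrite /hseq rev_cons rev_cat -cats1.
  by apply: piece_rev_chain; exists i', j'; right; left; split=> //; apply/andP.
- rewrite dir_to_up dir_to_down edge_inner_up; apply: piece_chain.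
  by exists i, j; right; right; split=> //; apply/andP.
- rewrite dir_to_up dir_to_down edge_inner_down.
  have -> : attach a P i' j'.+1 dS :: rev (vinner i' j') ++ [:: attach a P i' j' dN]
    = rev (vertseq a P i' j') by rewrite /vertseq rev_cons rev_cat -cats1.
  by apply: piece_rev_chain; exists i', j'; right; right; split=> //; apply/andP.
Qed.

Lemma edge_inner_uniq x y : uniq (edge_inner x y).
Proof.
have hu i j : uniq (hinner i j) by rewrite map_inj_uniq ?iota_uniq // => k1 k2 [].
have vu i j : uniq (vinner i j) by rewrite map_inj_uniq ?iota_uniq // => k1 k2 [].
by rewrite /edge_inner; do 3?case: ifP => _; rewrite ?rev_uniq.
Qed.

Lemma edge_inner_covered x y z : gadj x y -> z \in edge_inner x y ->
  ntag z != 0 /\ forall W, covered W z = (x \in W) && (y \in W).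
Proof.
case: x y => i j [i' j'].
case/gadjP => /= [[-> ->]|[-> ->]|[-> ->]|[-> ->]];
  rewrite ?edge_inner_right ?edge_inner_left ?edge_inner_up ?edge_inner_down ?mem_rev;
  by case/mapP=> k _ ->; split=> // W; rewrite /covered /ni /nj /= // andbC.
Qed.

Lemma covered_sub W1 W2 z : {subset W1 <= W2} -> covered W1 z -> covered W2 z.
Proof.
move=> s; rewrite /covered; case: ifP => _; first exact: s.
by case: ifP => _ /andP[h1 h2]; rewrite !s.
Qed.

Lemma lift_from_covered din x W z : path gadj x W -> z \in lift_from din x W ->
  covered (x :: W) z.
Proof.
have Tc x' d1 d2 W' : z \in traverse x' d1 d2 -> covered (x' :: W') z.
  by case/mem_traverse=> k -> _; rewrite /covered /ni /nj /= -surjective_pairing mem_head.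
elim: W din x => [|y W IH] din x /=; first by move=> _; apply: Tc.
case/andP=> g p; rewrite !mem_cat => /or3P[|/(edge_inner_covered g)[_ ->]|].
- exact: Tc.
- by rewrite mem_head inE mem_head orbT.
- by move/(IH _ _ p); apply: covered_sub => u h; rewrite inE h orbT.
Qed.

Lemma lift_from_uniq din x W : uniq (x :: W) -> path gadj x W -> uniq (lift_from din x W).
Proof.
elim: W din x => [|y W IH] din x /=; first by move=> _ _; apply: traverse_uniq.
case/andP=> nx u /andP[g p].
rewrite !cat_uniq traverse_uniq edge_inner_uniq IH //= andbT; apply/andP; split.
  apply/hasPn => z; rewrite mem_cat => /orP[].
    case/(edge_inner_covered g) => nt _; apply/negP => /mem_traverse[k E _].
    by rewrite E in nt.
  move/(lift_from_covered p) => cz; apply/negP => /mem_traverse[k E _].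
  by move: cz; rewrite E /covered /ni /nj /= -surjective_pairing => h; rewrite h in nx.
apply/hasPn => z /(lift_from_covered p) cz; apply/negP => /(edge_inner_covered g)[_ E].
by move: cz; rewrite E => /andP[h _]; rewrite h in nx.
Qed.

Lemma lift_from_head din x W : exists r, lift_from din x W = attach a P x.1 x.2 din :: r.
Proof.
case: W => [|y W] /=.
  by have [r1 [r2 [E1 E2]]] := traverse_ends x din dE; exists r1; rewrite E1.
by have [r1 [r2 [E1 E2]]] := traverse_ends x din (dir_to x y); rewrite E1; eexists.
Qed.

Lemma lift_from_last din x W :
  exists r, lift_from din x W = rcons r (attach a P (last x W).1 (last x W).2 dE).
Proof.
elim: W din x => [|y W IH] din x /=.
  by have [r1 [r2 [E1 E2]]] := traverse_ends x din dE; exists r2.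
have [r E] := IH (dir_to y x) y.
by rewrite E; exists (traverse x din (dir_to x y) ++ edge_inner x y ++ r); rewrite !rcons_cat.
Qed.

Lemma lift_from_chain din x W : path gadj x W -> all in_grid (x :: W) ->
  chain (adj a P) (lift_from din x W).
Proof.
elim: W din x => [|y W IH] din x /=; first by move=> _ /andP[h _]; apply: traverse_chain.
case/andP=> g p /andP[ix /andP[iy iW]].
have [r1 [r2 [_ E2]]] := traverse_ends x din (dir_to x y).
have [r E] := lift_from_head (dir_to y x) y W.
have CL : chain (adj a P) (lift_from (dir_to y x) y W) by apply: IH => //=; rewrite iy.
rewrite E2 E cat_rcons; apply: chain_cat_shared; first by rewrite -E2; apply: traverse_chain.
rewrite -cat_cons; apply: chain_cat_shared; last by rewrite -E.
by rewrite rcons_cons -cats1; apply: edge_lift_chain.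
Qed.

Lemma lift_from_vertex din x W z : path gadj x W -> all in_grid (x :: W) ->
  z \in lift_from din x W -> is_vertex a P z.
Proof.
have Tv u d1 d2 : in_grid u -> z \in traverse u d1 d2 -> is_vertex a P z.
  by case/andP=> h1 h2 /mem_traverse[k -> lt].
elim: W din x => [|y W IH] din x /=; first by move=> _ /andP[h _]; apply: Tv.
case/andP=> g p /andP[ix /andP[iy iW]]; rewrite !mem_cat => /or3P[|h|]; first exact: Tv.
- move: g ix iy h; case: x y {IH p iW} => i j [i' j'].
  case/gadjP => [[-> ->]|[-> ->]|[-> ->]|[-> ->]];
  rewrite ?edge_inner_right ?edge_inner_left ?edge_inner_up ?edge_inner_down ?mem_rev
    /hinner /vinner /in_grid /= => h1 h2;
  by case/mapP => k; rewrite mem_iota => /andP[_ lt] -> /=; split=> //; lia.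
- by apply: IH => //=; rewrite iy.
Qed.

Lemma lift_from_suffix W1 y W2 din x :
  {subset lift_from (dir_to y (last x W1)) y W2 <= lift_from din x (W1 ++ y :: W2)}.
Proof.
elim: W1 din x => [|z W1 IH] din x /= u h; first by rewrite !mem_cat h !orbT.
by rewrite !mem_cat (IH _ _ _ h) !orbT.
Qed.

Lemma lift_walk_traverse W p x q : infix [:: p; x; q] W ->
  {subset traverse x (dir_to x p) (dir_to x q) <= lift_walk W}.
Proof.
case/infixP=> -[|c A] [B ->] u h /=; first by rewrite !mem_cat h !orbT.
have := @lift_from_suffix (A ++ [:: p]) x (q :: B) dW c u.
by rewrite last_cat -catA /= !mem_cat h; apply.
Qed.

Lemma lift_walk_edge W x y : infix [:: x; y] W -> {subset edge_inner x y <= lift_walk W}.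
Proof.
case/infixP=> -[|c A] [B ->] u h /=; first by rewrite !mem_cat h orbT.
by apply: (@lift_from_suffix A x (y :: B) dW c u); rewrite /= !mem_cat h orbT.
Qed.

(** * Snakes through a given vertex *)

Definition entry_dir (u j : nat) : dir := if j == u then dW else if u < j then dS else dN.
Definition exit_dir (j y : nat) : dir := if j == y then dE else if j < y then dN else dS.

Lemma dir_to_snake_prev i u j : 1 <= i -> 1 <= j ->
  dir_to (i, j) (snake_prev i u j) = entry_dir u j.
Proof.
move=> hi hj; rewrite /snake_prev /entry_dir; case: eqP => [->|_].
  by rewrite -{1}(prednK hi) dir_to_left.
by case: ifP => _; [rewrite -{1}(prednK hj) dir_to_down | rewrite dir_to_up].
Qed.

Lemma dir_to_snake_next i j y : 1 <= j -> dir_to (i, j) (snake_next i j y) = exit_dir j y.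
Proof.
move=> hj; rewrite /snake_next /exit_dir; case: eqP => [->|_]; first by rewrite dir_to_right.
by case: ifP => _; [rewrite dir_to_up | rewrite -{1}(prednK hj) dir_to_down].
Qed.

Definition pattern_visits (q : pattern) (u y j : nat) : bool :=
  (minn u y <= j <= maxn u y) && (onp q (entry_dir u j) != onp q (exit_dir j y)).

Definition snake_visits (v : node) (u y : nat) : bool :=
  match v with
  | (0, i, j, _) => pattern_visits (pat P i j) u y j
  | (1, _, j, _) => y == j
  | (2, _, j, _) => minn u y <= j < maxn u y
  | _ => false
  end.

Lemma mem_lift_snake v R : in_int a P 1 v -> snake_visits v (R (ni v).-1) (R (ni v)) ->
  v \in lift_walk (snake 1 a R).
Proof.
case: v => [[[t i] j] k]; rewrite /ni /=.
case=> vv; case: t vv => [|[|[|t]]] //=.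
- case=> _ _ hk [hi hj] /andP[hb hd].
  apply: (lift_walk_traverse (infix_snake_triple (R := R) (_ : 2 <= i < a) hb)); first lia.
  rewrite dir_to_snake_prev ?dir_to_snake_next; try lia.
  rewrite /traverse /=; move: hd.
  case: (onp _ (entry_dir _ _)) (onp _ (exit_dir _ _)) => [] [] //= _;
    rewrite ?mem_rev; apply/mapP; exists k => //; rewrite mem_iota; lia.
- case=> _ _ hk [hi [hi2 hj]] /eqP E.
  apply: (lift_walk_edge (infix_snake_right R (_ : 1 <= i < a))); first lia.
  by rewrite E edge_inner_right; apply/mapP; exists k => //; rewrite mem_iota; lia.
- case=> _ _ hk [hi [hj hj2]] hb.
  case: (infix_snake_step (_ : 1 <= i <= a) hb) => [|/lift_walk_edge|/lift_walk_edge]; first lia;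
    apply; rewrite ?edge_inner_up ?edge_inner_down ?mem_rev;
    apply/mapP; exists k => //; rewrite mem_iota; lia.
Qed.

Definition exit_row (v : node) (u : nat) : nat :=
  match v with
  | (0, i, j, _) => match pat P i j with
                    | Q1 => if u <= j then a else 1
                    | Q2 => if j <= u then 1 else a
                    | Q3 => if u == j then 1 else j
                    end
  | (1, _, j, _) => j
  | (2, _, j, _) => if u <= j then a else 1
  | _ => 1
  end.

Definition entry_row (v : node) (y : nat) : nat :=
  match v with
  | (0, i, j, _) => match pat P i j with
                    | Q1 => if j <= y then 1 else a
                    | Q2 => if y <= j then a else 1
                    | Q3 => if y == j then 1 else j
                    end
  | (2, _, j, _) => if y <= j then a else 1
  | _ => 1
  end.

Definition is_Q3_node (v : node) : bool :=
  (ntag v == 0) && (if pat P (ni v) (nj v) is Q3 then true else false).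

Lemma in_int_bounds v : in_int a P 1 v -> (2 <= ni v <= a.-1) && (2 <= nj v <= a.-1).
Proof. by case: v => [[[t i] j] k] [_]; rewrite /ni /nj; case: t => [|[|[|t]]] //= => h; lia. Qed.

Lemma snake_visits_horizontal v u y : ntag v = 1 -> snake_visits v u y = (y == nj v).
Proof. by case: v => [[[t i] j] k]; rewrite /ntag /= => ->. Qed.

Lemma exit_row_visits v u : 5 <= a -> in_int a P 1 v -> 1 <= u <= a ->
  snake_visits v u (exit_row v u) && (1 <= exit_row v u <= a).
Proof.
move=> a5; case: v => [[[t i] j] k] [_]; case: t => [|[|[|t]]] //=.
- case=> hi hj hu; rewrite /pattern_visits /entry_dir /exit_dir.
  by case: (pat P i j); do !case: ifP => ? //=; lia.
- by case=> hi [hi2 hj] hu; rewrite eqxx /=; lia.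
- by case=> hi [hj hj2] hu; do !case: ifP => ? //=; lia.
Qed.

Lemma entry_row_visits v y : 5 <= a -> in_int a P 1 v -> ntag v != 1 -> 1 <= y <= a ->
  snake_visits v (entry_row v y) y && (1 <= entry_row v y <= a).
Proof.
move=> a5; case: v => [[[t i] j] k] [_]; case: t => [|[|[|t]]] //=.
- case=> hi hj _ hy; rewrite /pattern_visits /entry_dir /exit_dir.
  by case: (pat P i j); do !case: ifP => ? //=; lia.
- by case=> hi [hj hj2] _ hy; do !case: ifP => ? //=; lia.
Qed.

Lemma exit_row_neq v j : 5 <= a -> in_int a P 1 v -> ntag v != 1 -> 2 <= j <= a.-1 ->
  exit_row v j != j.
Proof.
move=> a5; case: v => [[[t i] j'] k] [_]; case: t => [|[|[|t]]] //=.
- by case=> hi hj _ hy; case: (pat P i j'); do !case: ifP => ? //=; lia.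
- by case=> hi [hj hj2] _ hy; do !case: ifP => ? //=; lia.
Qed.

Lemma snake_visits_full v : 5 <= a -> in_int a P 1 v -> ntag v != 1 -> ~~ is_Q3_node v ->
  snake_visits v 1 a.
Proof.
move=> a5; case: v => [[[t i] j] k] [_]; rewrite /is_Q3_node /ni /nj.
case: t => [|[|[|t]]] //=.
- case=> hi hj _; rewrite /pattern_visits /entry_dir /exit_dir.
  by case: (pat P i j) => //= _; do !case: ifP => ? //=; lia.
- by case=> hi [hj hj2] _ _; lia.
Qed.

Lemma snake_visits_Q3 v y : 5 <= a -> in_int a P 1 v -> is_Q3_node v -> y != nj v -> 1 <= y ->
  snake_visits v (nj v) y.
Proof.
move=> a5; case: v => [[[t i] j] k] [_]; rewrite /is_Q3_node /ni /nj.
case: t => [|[|[|t]]] //=; case=> hi hj; rewrite /pattern_visits /entry_dir /exit_dir.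
by case: (pat P i j) => // _ hy hy1; do !case: ifP => ? //=; lia.
Qed.

(* A horizontal-edge vertex fixes the exit row, a Q3 vertex forces entering at
   its own row, and otherwise running through the whole column works. *)
Lemma rows_visiting_both v w : 5 <= a -> in_int a P 1 v -> in_int a P 1 w ->
  ~~ [&& ntag v == 1, ntag w == 1 & nj v != nj w] ->
  exists u y, [/\ 1 <= u <= a, 1 <= y <= a, snake_visits v u y & snake_visits w u y].
Proof.
move=> a5 iv iw hvw.
have /andP[_ bv] := in_int_bounds iv; have /andP[_ bw] := in_int_bounds iw.
have [hv|hv] := eqVneq (ntag v) 1.
  exists (entry_row w (nj v)), (nj v).
  have [hw|hw] := eqVneq (ntag w) 1.
    move: hvw; rewrite hv hw /= negbK => /eqP e.
    have -> : entry_row w (nj v) = 1 by case: w iw hw {e bw} => [[[[|[|t]] i] j] k].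
    by split; rewrite ?snake_visits_horizontal ?e //; lia.
  have /andP[g b] := entry_row_visits a5 iw hw (ltac:(lia) : 1 <= nj v <= a).
  by split=> //; [lia | rewrite snake_visits_horizontal].
have [hw|hw] := eqVneq (ntag w) 1.
  exists (entry_row v (nj w)), (nj w).
  have /andP[g b] := entry_row_visits a5 iv hv (ltac:(lia) : 1 <= nj w <= a).
  by split=> //; [lia | rewrite snake_visits_horizontal].
have [qv|qv] := boolP (is_Q3_node v).
  exists (nj v), (exit_row w (nj v)).
  have /andP[g b] := exit_row_visits a5 iw (ltac:(lia) : 1 <= nj v <= a).
  split=> //; first lia.
  by apply: snake_visits_Q3 => //; [apply: exit_row_neq => //; lia | lia].
have [qw|qw] := boolP (is_Q3_node w).
  exists (nj w), (exit_row v (nj w)).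
  have /andP[g b] := exit_row_visits a5 iv (ltac:(lia) : 1 <= nj w <= a).
  split=> //; first lia.
  by apply: snake_visits_Q3 => //; [apply: exit_row_neq => //; lia | lia].
by exists 1, a; split; try lia; apply: snake_visits_full.
Qed.

(** * Connecting s and t *)

Lemma vinner_split c j k : k <= vsub P c j ->
  vinner c j =
  [seq (2, c, j, m) | m <- iota 0 k] ++ [seq (2, c, j, m) | m <- iota k (vsub P c j - k)].
Proof. by move=> h; rewrite /vinner -map_cat -iotaD subnKC. Qed.

Lemma boundary_connector c x r : (forall j, deg4 a c j = false) ->
  in_column a P c x -> 1 <= r <= a ->
  exists R pre, [/\ 1 <= R <= a, chain (adj a P) (rcons pre (0, c, R, 0)),
    head (0, c, R, 0) pre = x, uniq pre &
    forall z, z \in pre -> [/\ is_vertex a P z, ntag z = 2, ni z = c &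
      ~~ (((c, nj z) \in colseg c R r) && ((c, (nj z).+1) \in colseg c R r))]].
Proof.
move=> nd4; case: x => [[[t i] j] k]; case=> vv; case: t vv => [|[|[|t]]] //=.
  case=> hi hj hk ci hr; subst i; exists j, [::]; split=> //.
  by move: hk; rewrite /vlen nd4 ltnS leqn0 => /eqP ->.
case=> hi hj hk ci hr; subst i.
have VT : vertseq a P c j = (0, c, j, 0) :: vinner c j ++ [:: (0, c, j.+1, 0)].
  by rewrite /vertseq /attach /vlen !nd4; case: ifP; case: ifP.
have PC : piece a P (vertseq a P c j) by exists c, j; right; right.
(* Leave the edge through its end farther from row r. *)
case: (leqP r j) => hr'.
  exists j, (rev [seq (2, c, j, m) | m <- iota 0 k.+1]); split.
  - lia.
  - by rewrite -rev_cons; apply: chain_rev (@adj_sym) _ _; move: (piece_chain PC);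
      rewrite VT (vinner_split hk) -catA -cat_cons; apply: chain_catl.
  - by rewrite iota_rcons map_rcons rev_rcons.
  - by rewrite rev_uniq map_inj_uniq ?iota_uniq // => ? ? [].
  - move=> z; rewrite mem_rev => /mapP[m]; rewrite mem_iota => hm -> /=.
    split=> //=; first by split=> //; lia.
    by rewrite /nj !mem_colseg /= eqxx /=; lia.
exists j.+1, [seq (2, c, j, m) | m <- iota k (vsub P c j - k)]; split.
- lia.
- rewrite -cats1; move: (piece_chain PC); rewrite VT (vinner_split (ltnW hk)).
  by rewrite -catA -cat_cons => /chain_catr.
- by rewrite (_ : vsub P c j - k = (vsub P c j - k).-1.+1); last lia.
- by rewrite map_inj_uniq ?iota_uniq // => ? ? [].
- move=> z /mapP[m]; rewrite mem_iota => hm -> /=.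
  split=> //=; first by split=> //; lia.
  by rewrite /nj !mem_colseg /= eqxx /=; lia.
Qed.

Lemma gpath_join pre x L post s t :
  chain (adj a P) (rcons pre x) -> chain (adj a P) (x :: L) ->
  chain (adj a P) (last x L :: post) -> head x pre = s -> last (last x L) post = t ->
  uniq (pre ++ x :: L ++ post) -> {in pre ++ x :: L ++ post, forall z, is_vertex a P z} ->
  gpath_between a P (pre ++ x :: L ++ post) s t.
Proof.
move=> c1 c2 c3 hs ht u vz; split; last by move/(congr1 size); rewrite size_cat /= addnS.
have c : chain (adj a P) (pre ++ x :: L ++ post).
  apply: chain_cat_shared => //.
  by rewrite -cat_cons (lastI x L) cat_rcons; apply: chain_cat_shared; rewrite -?lastI.
split=> //; first exact: chain_nth.
  by case: pre hs {c1 u vz c} => [|y pre] /= <-.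
by rewrite -ht last_cat /= last_cat.
Qed.

Lemma covered_boundary_edge W c R r z : ntag z = 2 -> ni z = c ->
  ~~ (((c, nj z) \in colseg c R r) && ((c, (nj z).+1) \in colseg c R r)) ->
  {in W, forall x, x.1 = c -> x \in colseg c R r} -> ~~ covered W z.
Proof.
move=> t2 <- hz hW; rewrite /covered t2 /=; apply: contra hz => /andP[h1 h2].
by rewrite (hW _ h1) // (hW _ h2).
Qed.

Lemma attach_not_deg4 i j d : deg4 a i j = false -> attach a P i j d = (0, i, j, 0).
Proof. by move=> h; rewrite /attach /vlen h; case: ifP. Qed.

Lemma deg4_first j : deg4 a 1 j = false.
Proof. by []. Qed.

Lemma deg4_last : 1 <= a -> forall j, deg4 a a j = false.
Proof. by move=> h j; rewrite /deg4; apply/negbTE; lia. Qed.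

Section CrossingWalk.
Variables (r1 ra : nat) (Wmid : seq gvertex).
Hypotheses (a2 : 2 <= a) (r1_range : 1 <= r1 <= a) (ra_range : 1 <= ra <= a).
Hypothesis Wmid_sorted : sorted gadj ((1, r1) :: Wmid ++ [:: (a, ra)]).
Hypothesis Wmid_uniq : uniq Wmid.
Hypothesis Wmid_inner : forall z : gvertex, z \in Wmid -> (2 <= z.1 <= a.-1) && (1 <= z.2 <= a).

(* The end rows R0 and Ra are fixed only when s and t are connected. *)
Definition crossing_walk (R0 Ra : nat) : seq gvertex := colseg 1 R0 r1 ++ Wmid ++ colseg a ra Ra.

Section FixedEnds.
Variables (R0 Ra : nat).
Hypotheses (R0_range : 1 <= R0 <= a) (Ra_range : 1 <= Ra <= a).

Lemma crossing_walk_sorted : sorted gadj (crossing_walk R0 Ra).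
Proof.
have [l0 E0] := colseg_last 1 R0 r1; have [l2 E2] := colseg_head a ra Ra.
rewrite /crossing_walk E0 E2 catA sorted_cat_cons rcons_cat cat_rcons sorted_cat_cons.
rewrite -E0 sorted_colseg.
by move: Wmid_sorted (sorted_colseg a ra Ra); rewrite E2 cats1 /= => -> ->.
Qed.

Lemma crossing_walk_uniq : uniq (crossing_walk R0 Ra).
Proof.
rewrite /crossing_walk !cat_uniq !colseg_uniq Wmid_uniq /= andbT; apply/andP; split.
  apply/hasPn => -[zi zj]; rewrite mem_cat !mem_colseg /= negb_and.
  by case/orP => [/Wmid_inner /= h | /andP[/eqP -> _]]; apply/orP; left; apply/negP => /eqP e; lia.
apply/hasPn => -[zi zj]; rewrite mem_colseg => /andP[/eqP /= -> _].
by apply/negP => /Wmid_inner /=; lia.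
Qed.

Lemma crossing_walk_in_grid : all in_grid (crossing_walk R0 Ra).
Proof.
apply/allP => -[zi zj]; rewrite /in_grid !mem_cat !mem_colseg => /or3P[/andP[/eqP /= -> h]|h|
  /andP[/eqP /= -> h]] /=; try lia.
by have /= := Wmid_inner h; lia.
Qed.

Lemma crossing_walk_first_column :
  {in crossing_walk R0 Ra, forall x, x.1 = 1 -> x \in colseg 1 R0 r1}.
Proof.
move=> [xi xj]; rewrite !mem_cat => /or3P[// | /Wmid_inner /= h e | ]; first lia.
by rewrite mem_colseg /= => /andP[/eqP -> _] e; lia.
Qed.

Lemma crossing_walk_last_column :
  {in crossing_walk R0 Ra, forall x, x.1 = a -> x \in colseg a Ra ra}.
Proof.
move=> [xi xj]; rewrite !mem_cat => /or3P[ | /Wmid_inner /= h e | ]; last 1 first.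
- by rewrite mem_colseg minnC maxnC -mem_colseg.
- by rewrite mem_colseg /= => /andP[/eqP -> _] e; lia.
- lia.
Qed.

Lemma lift_crossing_walk : exists L, [/\ lift_walk (crossing_walk R0 Ra) = (0, 1, R0, 0) :: L,
  last (0, 1, R0, 0) L = (0, a, Ra, 0), chain (adj a P) ((0, 1, R0, 0) :: L),
  uniq ((0, 1, R0, 0) :: L) &
  {in (0, 1, R0, 0) :: L, forall z, is_vertex a P z /\ covered (crossing_walk R0 Ra) z}].
Proof.
have [W' EW] : exists W', crossing_walk R0 Ra = (1, R0) :: W'.
  by have [l E] := colseg_head 1 R0 r1; rewrite /crossing_walk E; eexists.
have pW : path gadj (1, R0) W' by move: crossing_walk_sorted; rewrite EW.
have gW : all in_grid ((1, R0) :: W') by rewrite -EW crossing_walk_in_grid.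
have [L EL] := lift_from_head dW (1, R0) W'.
have [r' Er'] := lift_from_last dW (1, R0) W'.
have lastW : last (1, R0) W' = (a, Ra).
  by have [l E] := colseg_last a ra Ra; rewrite -[last _ _]/(last (1, R0) ((1, R0) :: W'))
    -EW /crossing_walk E !last_cat last_rcons.
rewrite attach_not_deg4 ?deg4_first // in EL.
rewrite lastW attach_not_deg4 ?(deg4_last (ltnW a2)) // in Er'.
exists L; split; rewrite -?EL.
- by rewrite EW.
- by have := congr1 (last (0, 1, R0, 0)) (etrans (esym EL) Er'); rewrite last_rcons.
- exact: lift_from_chain.
- by apply: lift_from_uniq => //; rewrite -EW crossing_walk_uniq.
- move=> z hz; split; first exact: lift_from_vertex hz.
  by rewrite EW; apply: lift_from_covered hz.
Qed.

End FixedEnds.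

Lemma crossing_walk_gpath s t v w : in_column a P 1 s -> in_column a P a t ->
  (forall R0 Ra, 1 <= R0 <= a -> 1 <= Ra <= a ->
    (v \in lift_walk (crossing_walk R0 Ra)) && (w \in lift_walk (crossing_walk R0 Ra))) ->
  exists p, gpath_between a P p s t /\ v \in p /\ w \in p.
Proof.
move=> cs ct vw.
have [R0 [pre [hR0 cpre hpre upre Ppre]]] := boundary_connector deg4_first cs r1_range.
have [Ra [pre' [hRa cpre' hpre' upre' Ppre']]] :=
  boundary_connector (deg4_last (ltnW a2)) ct ra_range.
have [L [EL lastL cL uL PL]] := lift_crossing_walk hR0 hRa.
have /andP[vL wL] := vw R0 Ra hR0 hRa; rewrite EL in vL wL.
exists (pre ++ (0, 1, R0, 0) :: L ++ rev pre'); split; last first.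
  by rewrite -cat_cons !mem_cat vL wL !orbT.
have notin_lift z : z \in pre ++ pre' -> z \notin (0, 1, R0, 0) :: L.
  rewrite mem_cat => /orP[/Ppre|/Ppre'] [_ t2 c hz]; apply/negP => /PL[_].
    by apply/negP/(covered_boundary_edge t2 c hz)/crossing_walk_first_column.
  by apply/negP/(covered_boundary_edge t2 c hz)/crossing_walk_last_column.
apply: gpath_join => //.
- by rewrite lastL -rev_rcons; apply: chain_rev cpre'; apply: adj_sym.
- by rewrite lastL last_rev_head.
- rewrite -cat_cons !cat_uniq rev_uniq upre upre' uL has_cat negb_or !andbT !andTb -andbA.
  apply/and3P; split; apply/hasPn => z hz; rewrite ?mem_rev in hz *; apply/negP => hz'.
  + by move: (notin_lift z); rewrite mem_cat hz' hz => /(_ isT).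
  + have [_ _ c _] := Ppre z hz'; have [_ _ c' _] := Ppre' z hz; lia.
  + by move: (notin_lift z); rewrite mem_cat hz hz' orbT => /(_ isT).
- move=> z; rewrite -cat_cons !mem_cat mem_rev => /or3P[/Ppre[] | /PL[] | /Ppre'[]] //.
Qed.

End CrossingWalk.

(** * Routing through v and w *)

Definition with_ends (R : nat -> nat) (R0 Ra : nat) (i : nat) : nat :=
  if i == 0 then R0 else if i == a then Ra else R i.

Lemma with_ends_inner R R0 Ra i : 0 < i < a -> with_ends R R0 Ra i = R i.
Proof. by move=> h; rewrite /with_ends !ifF //; apply/eqP; lia. Qed.

Lemma snake_with_ends R R0 Ra : 2 <= a ->
  snake 1 a (with_ends R R0 Ra) = colseg 1 R0 (R 1) ++ snake 2 (a - 2) R ++ colseg a (R a.-1) Ra.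
Proof.
move=> a2; rewrite {1}(_ : a = 1 + ((a - 2) + 1)); last by lia.
rewrite !snake_cat !snake_cons !snake0 !cats0 (_ : 1 + 1 + (a - 2) = a); last by lia.
rewrite (eq_snake (R' := R)) => [|i /andP[h1 h2]]; last by rewrite with_ends_inner //; lia.
by rewrite /with_ends /= eqxx !ifF //; apply/eqP; lia.
Qed.

Lemma snake_gpath s t v w R : 5 <= a -> in_column a P 1 s -> in_column a P a t ->
  in_int a P 1 v -> in_int a P 1 w -> (forall i, 1 <= i <= a.-1 -> 1 <= R i <= a) ->
  snake_visits v (R (ni v).-1) (R (ni v)) -> snake_visits w (R (ni w).-1) (R (ni w)) ->
  exists p, gpath_between a P p s t /\ v \in p /\ w \in p.
Proof.
move=> a5 cs ct iv iw hR sv sw; have a2 : 2 <= a by lia.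
apply: (@crossing_walk_gpath (R 1) (R a.-1) (snake 2 (a - 2) R)) => //; try by apply: hR; lia.
- rewrite /= cat_path -[(1, R 1)]/(2.-1, R 2.-1) path_snake // last_snake //= andbT.
  rewrite (_ : 1 + (a - 2) = a.-1); last by lia.
  by rewrite /gadj /= prednK ?eqxx //; lia.
- exact: snake_uniq.
- move=> [zi zj]; rewrite mem_snake /= => /andP[h1 h2].
  by have := hR zi.-1 ltac:(lia); have := hR zi ltac:(lia); lia.
- move=> R0 Ra h0 ha; rewrite /crossing_walk -snake_with_ends //.
  have /andP[bv _] := in_int_bounds iv; have /andP[bw _] := in_int_bounds iw.
  by apply/andP; split; apply: mem_lift_snake; rewrite ?with_ends_inner //; lia.
Qed.

(* The snake runs along row 1 except in the columns of v and w; in the column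
   of w it starts where it left the column of v if the two are adjacent. *)
Lemma gpath_distinct_columns s t v w : 5 <= a ->
  in_column a P 1 s -> in_column a P a t -> in_int a P 1 v -> in_int a P 1 w -> ni v < ni w ->
  exists p, gpath_between a P p s t /\ v \in p /\ w \in p.
Proof.
move=> a5 cs ct iv iw lt.
have /andP[/andP[v2 _] _] := in_int_bounds iv.
set u := if (ni w).-1 == ni v then exit_row v 1 else 1.
pose R i := if i == ni v then exit_row v 1 else if i == ni w then exit_row w u else 1.
have /andP[sv bv] := exit_row_visits a5 iv (ltac:(lia) : 1 <= 1 <= a).
have hu : 1 <= u <= a by rewrite /u; case: ifP => _ //; lia.
have /andP[sw bw] := exit_row_visits a5 iw hu.
apply: (@snake_gpath s t v w R) => //.
- by move=> i _; rewrite /R; do 2?case: ifP => _ //; lia.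
- by rewrite /R eqxx !ifF //; apply/eqP; lia.
- have -> : R (ni w).-1 = u.
    by rewrite /R /u; case: ifP => // _; rewrite ifF //; apply/eqP; lia.
  by rewrite /R eqxx ifF //; apply/eqP; lia.
Qed.

Lemma gpath_same_column s t v w : 5 <= a ->
  in_column a P 1 s -> in_column a P a t -> in_int a P 1 v -> in_int a P 1 w -> ni v = ni w ->
  ~~ [&& ntag v == 1, ntag w == 1 & nj v != nj w] ->
  exists p, gpath_between a P p s t /\ v \in p /\ w \in p.
Proof.
move=> a5 cs ct iv iw e hvw.
have [u [y [hu hy sv sw]]] := rows_visiting_both a5 iv iw hvw.
pose R i := if i == (ni v).-1 then u else if i == ni v then y else 1.
have /andP[/andP[v2 _] _] := in_int_bounds iv.
have Rv1 : R (ni v).-1 = u by rewrite /R eqxx.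
have Rv : R (ni v) = y by rewrite /R ifF ?eqxx //; apply/eqP; lia.
apply: (@snake_gpath s t v w R) => //; rewrite -?e ?Rv1 ?Rv //.
by move=> i _; rewrite /R; do 2?case: ifP => _ //; lia.
Qed.

(* Two horizontal-edge vertices between the same pair of columns cannot both
   be visited by a snake, which crosses each pair of consecutive columns once:
   the walk climbs column c to the lower edge, crosses it, climbs column c+1
   to the upper edge, crosses back and finishes column c. *)
Lemma gpath_two_rungs s t v w : 5 <= a ->
  in_column a P 1 s -> in_column a P a t -> in_int a P 1 v -> in_int a P 1 w ->
  ntag v = 1 -> ntag w = 1 -> ni v = ni w -> nj v < nj w ->
  exists p, gpath_between a P p s t /\ v \in p /\ w \in p.
Proof.
move=> a5 cs ct; case: v => [[[tv c] j1] k1]; case: w => [[[tw c'] j2] k2].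
rewrite /ntag /ni /nj /= => iv iw e1 e2 ec lt; subst tv tw c'.
have [[_ _ hk1] [hc [hc2 hj1]]] := iv; have [[_ _ hk2] [_ [_ hj2]]] := iw.
set X1 := snake 2 (c - 2) (fun _ => 1); set X2 := colseg c 1 j1.
set X3 := colseg c.+1 j1 j2; set X4 := colseg c j2 a.
set X5 := snake c.+1 (a - c.+1) (fun _ => a).
apply: (@crossing_walk_gpath 1 a (X1 ++ X2 ++ X3 ++ X4 ++ X5)) => //; try lia.
- rewrite /= -!catA !cat_path (@path_snake 2 (c - 2) (fun _ => 1)) //.
  rewrite (@last_snake 2 (c - 2) (fun _ => 1)) // (_ : (2 + (c - 2)).-1 = c.-1); last by lia.
  rewrite !last_colseg -[(c, a)]/(c.+1.-1, (fun _ => a) c.+1.-1) path_snake //.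
  rewrite last_snake // (_ : (c.+1 + (a - c.+1)).-1 = a.-1); last by lia.
  by rewrite !path_colseg /= /gadj /= ?prednK ?eqxx ?orbT //; lia.
- rewrite !cat_uniq !snake_uniq !colseg_uniq /= !andbT.
  by repeat (apply/andP; split); apply/hasPn => -[zi zj];
    rewrite ?mem_cat ?mem_snake ?mem_colseg /= => h; apply/negP;
    rewrite ?mem_cat ?mem_snake ?mem_colseg /=; lia.
- by move=> [zi zj]; rewrite !mem_cat !mem_snake !mem_colseg /= => h; lia.
- move=> R0 Ra _ _; apply/andP; split.
  + apply: (lift_walk_edge (x := (c, j1)) (y := (c.+1, j1))).
      rewrite /crossing_walk; apply/infix_catl/infix_catr/infix_catl.
      by rewrite catA; apply/infix_catr/infix_colseg_join.
    by rewrite edge_inner_right; apply/mapP; exists k1 => //; rewrite mem_iota; lia.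
  + apply: (lift_walk_edge (x := (c.+1, j2)) (y := (c, j2))).
      rewrite /crossing_walk; apply/infix_catl/infix_catr/infix_catl/infix_catl.
      by rewrite catA; apply/infix_catr/infix_colseg_join.
    by rewrite edge_inner_left mem_rev; apply/mapP; exists k2 => //; rewrite mem_iota; lia.
Qed.

End Lifting.

Theorem lemma10 (a : nat) (P : pgparams) (s v w t : node) :
  5 <= a ->
  in_column a P 1 s -> in_int a P 1 v -> in_int a P 1 w -> in_column a P a t ->
  exists p : seq node,
    gpath_between a P p s t /\ v \in p /\ w \in p.
Proof.
move=> a5 cs iv iw ct.
have swap : (exists p, gpath_between a P p s t /\ w \in p /\ v \in p) ->
    exists p, gpath_between a P p s t /\ v \in p /\ w \in p.
  by case=> p [g [h1 h2]]; exists p.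
case: (ltngtP (ni v) (ni w)) => [lt | gt | eq].
- exact: gpath_distinct_columns.
- exact/swap/gpath_distinct_columns.
have [/and3P[/eqP hv /eqP hw ne] | hvw] := boolP [&& ntag v == 1, ntag w == 1 & nj v != nj w].
  case: (ltngtP (nj v) (nj w)) => [lt | gt | e]; last by rewrite e eqxx in ne.
  - exact: gpath_two_rungs.
  - exact/swap/gpath_two_rungs.
exact: gpath_same_column.
Qed.
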